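(* Let $n\ge1$, $0\le k\le n$, $D^\star\in(0,1)$, $\varepsilon\in(0,D^\star)$ and $\rho=\varepsilon(D^\star-\varepsilon)/(2n)$. Consider the set $\mathcal F_k$ of $\lambda\in\mathcal L_n$ such that, with $t=t_{\mathrm{wf}}(\lambda,D^\star)$, we have $\lambda_i\ge t+\rho$ for all $i\le k$ and $0\le\lambda_i\le t-\rho$ for all $i>k$. Then every maximizer $\lambda^\star$ of $G(\lambda)=\mathbf R_{\mathrm{rc}}(\lambda,D^\star)-\mathbf R_{\mathrm{wf}}(\lambda,D^\star)$ over $\mathcal F_k$ satisfies $\lambda^\star_{k+1}=\lambda^\star_{k+2}=\dots=\lambda^\star_n$.
   Context: Logarithms are base 2. $\mathcal L_n=\{\lambda\in\mathbb R^n_{\ge0}:\sum_i\lambda_i=n\}$. For $\lambda\in\mathcal L_n$ and $T,t>0$: $D_{\mathrm{rc}}(\lambda,T)=\frac1n\sum_i\frac{\lambda_i}{1+\lambda_iT}$, $R_{\mathrm{rc}}(\lambda,T)=\frac1{2n}\sum_i\log(1+\lambda_iT)$, $D_{\mathrm{wf}}(\lambda,t)=\frac1n\sum_i\min\{\lambda_i,t\}$, $R_{\mathrm{wf}}(\lambda,t)=\frac1{2n}\sum_i\max\{0,\log(\lambda_i/t)\}$. For $D\in(0,1)$, $T_{\mathrm{rc}}(\lambda,D)$ is the unique $T>0$ with $D_{\mathrm{rc}}(\lambda,T)=D$, and $t_{\mathrm{wf}}(\lambda,D)$ is the unique $t\in(0,\max_i\lambda_i)$ with $D_{\mathrm{wf}}(\lambda,t)=D$.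 Set $\mathbf R_{\mathrm{rc}}(\lambda,D)=R_{\mathrm{rc}}(\lambda,T_{\mathrm{rc}}(\lambda,D))$ and $\mathbf R_{\mathrm{wf}}(\lambda,D)=R_{\mathrm{wf}}(\lambda,t_{\mathrm{wf}}(\lambda,D))$. *)

From HB Require Import structures.
From mathcomp Require Import all_boot all_order all_algebra.
From mathcomp Require Import all_classical all_reals.
From mathcomp Require Import exp.
Set Implicit Arguments. Unset Strict Implicit. Unset Printing Implicit Defensive.
Import Order.TTheory GRing.Theory Num.Theory.
Local Open Scope ring_scope.

Section Defs.
Variable R : realType.

Definition log2 (x : R) : R := ln x / ln 2.

Definition in_Ln (n : nat) (lam : 'I_n -> R) : Prop :=
  (forall i, 0 <= lam i) /\ \sum_(i < n) lam i = n%:R.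

Definition D_rc n (lam : 'I_n -> R) (T : R) : R :=
  n%:R^-1 * \sum_(i < n) lam i / (1 + lam i * T).
Definition R_rc n (lam : 'I_n -> R) (T : R) : R :=
  (2 * n%:R)^-1 * \sum_(i < n) log2 (1 + lam i * T).
Definition D_wf n (lam : 'I_n -> R) (t : R) : R :=
  n%:R^-1 * \sum_(i < n) Num.min (lam i) t.
Definition R_wf n (lam : 'I_n -> R) (t : R) : R :=
  (2 * n%:R)^-1 * \sum_(i < n) Num.max 0 (log2 (lam i / t)).

Definition maxlam n (lam : 'I_n -> R) : R := \big[Num.max/0]_(i < n) lam i.

Definition T_rc n (lam : 'I_n -> R) (D : R) : R :=
  xget 0 [set T | 0 < T /\ D_rc lam T = D].
Definition t_wf n (lam : 'I_n -> R) (D : R) : R :=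
  xget 0 [set t | 0 < t /\ t < maxlam lam /\ D_wf lam t = D].

Definition bR_rc n (lam : 'I_n -> R) (D : R) : R := R_rc lam (T_rc lam D).
Definition bR_wf n (lam : 'I_n -> R) (D : R) : R := R_wf lam (t_wf lam D).

Definition Gfun n (lam : 'I_n -> R) (D : R) : R := bR_rc lam D - bR_wf lam D.

(* F_k (0-based: indices i < k correspond to paper's i <= k) *)
Definition in_Fk (n k : nat) (D rho : R) (lam : 'I_n -> R) : Prop :=
  in_Ln lam /\
  (forall i : 'I_n, (i < k)%N -> t_wf lam D + rho <= lam i) /\
  (forall i : 'I_n, (k <= i)%N -> 0 <= lam i /\ lam i <= t_wf lam D - rho).

End Defs.

From HB Require Import structures.
From mathcomp Require Import all_boot all_order all_algebra.
From mathcomp Require Import all_classical all_reals all_analysis.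
From mathcomp Require Import ring lra.
Set Implicit Arguments. Unset Strict Implicit. Unset Printing Implicit Defensive.
Import Order.TTheory GRing.Theory Num.Theory.
Import numFieldNormedType.Exports.
Local Open Scope ring_scope.

(* If the tail of a maximizer were not constant, replace it by its mean mu.
   All tail entries lie below the water level t, which water-filling does not
   see: t, R_wf and membership in F_k are unchanged.  For reverse
   water-filling, x |-> x / (1 + x T) and x |-> log (1 + x T) are concave and
   their tangent lines at mu contribute nothing once summed, since averaging
   preserves the tail sum.  Hence at the old parameter T the distortion
   strictly increases and the rate does not decrease; as D_rc decreases in T,
   the new parameter is larger and the rate strictly increases, so G does. *)

Lemma ltr_sum_at (R : numDomainType) (I : finType) (F G : I -> R) (i0 : I) :
  (forall i, F i <= G i) -> F i0 < G i0 -> \sum_i F i < \sum_i G i.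
Proof.
move=> leFG ltFG0; rewrite (bigD1 i0) //= [X in _ < X](bigD1 i0) //=.
by apply: ltr_leD => //; apply: ler_sum.
Qed.

Section TailAverage.
Variables (R : realFieldType) (I : finType) (P : {pred I}) (a : I -> R).
Hypothesis P_nonempty : (0 < #|P|)%N.

Definition tail_mean : R := (\sum_(l in P) a l) / #|P|%:R.
Definition tail_avg (l : I) : R := if l \in P then tail_mean else a l.

Let card_P_gt0 : 0 < #|P|%:R :> R. Proof. by rewrite ltr0n. Qed.

Lemma sum_tail_avg : \sum_l tail_avg l = \sum_l a l.
Proof.
rewrite [LHS](bigID (mem P)) [RHS](bigID (mem P)) /=; congr (_ + _); last first.
  by apply: eq_bigr => l /negbTE; rewrite /tail_avg => ->.
rewrite (eq_bigr (fun=> tail_mean)) => [|l]; last by rewrite /tail_avg => ->.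
by rewrite sumr_const -mulr_natr divfK // gt_eqF.
Qed.

Lemma tail_mean_le c : (forall l, l \in P -> a l <= c) -> tail_mean <= c.
Proof.
move=> le_ac; rewrite ler_pdivrMr // -sumr_const mulr_sumr.
by apply: ler_sum => l Pl; rewrite mulr1 le_ac.
Qed.

Lemma tail_mean_ge c : (forall l, l \in P -> c <= a l) -> c <= tail_mean.
Proof.
move=> le_ca; rewrite ler_pdivlMr // -sumr_const mulr_sumr.
by apply: ler_sum => l Pl; rewrite mulr1 le_ca.
Qed.

Lemma exists_neq_tail_mean i j : i \in P -> j \in P -> a i != a j ->
  exists2 l, l \in P & a l != tail_mean.
Proof.
move=> Pi Pj; case: (eqVneq (a i) tail_mean) => [-> neq|]; last by exists i.
by exists j => //; rewrite eq_sym.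
Qed.

Variables (F : R -> R) (c : R).
Hypothesis F_tangent :
  forall l, l \in P -> F (a l) <= F tail_mean + c * (a l - tail_mean).

Let tangent_tail_avg l : F (a l) <= F (tail_avg l) + c * (a l - tail_avg l).
Proof. by rewrite /tail_avg; case: ifP => [/F_tangent|] //; rewrite subrr mulr0 addr0. Qed.

Let sum_tangent_tail_avg :
  \sum_l (F (tail_avg l) + c * (a l - tail_avg l)) = \sum_l F (tail_avg l).
Proof. by rewrite big_split /= -mulr_sumr sumrB sum_tail_avg subrr mulr0 addr0. Qed.

Lemma sum_le_tail_avg : \sum_l F (a l) <= \sum_l F (tail_avg l).
Proof. by rewrite -sum_tangent_tail_avg; apply: ler_sum => l _. Qed.

Lemma sum_lt_tail_avg l0 : l0 \in P ->
  F (a l0) < F tail_mean + c * (a l0 - tail_mean) ->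
  \sum_l F (a l) < \sum_l F (tail_avg l).
Proof.
move=> Pl0 lt0; rewrite -sum_tangent_tail_avg; apply: (ltr_sum_at (i0 := l0)) => //.
by rewrite /tail_avg Pl0.
Qed.

End TailAverage.

Section Log2.
Variable R : realType.

Lemma ln2_gt0 : 0 < ln (2 : R).
Proof. by apply: ln_gt0; rewrite ltr1n. Qed.

Lemma log2_le0 (x : R) : x <= 1 -> log2 x <= 0.
Proof. by move=> x1; rewrite /log2 pmulr_lle0 ?invr_gt0 ?ln2_gt0 ?ln_le0. Qed.

Lemma ler_log2 (x y : R) : 0 < x -> x <= y -> log2 x <= log2 y.
Proof.
move=> x0 xy; rewrite /log2 ler_pM2r ?invr_gt0 ?ln2_gt0 //.
by rewrite ler_ln ?posrE // (lt_le_trans x0).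
Qed.

Lemma ltr_log2 (x y : R) : 0 < x -> x < y -> log2 x < log2 y.
Proof.
move=> x0 xy; rewrite /log2 ltr_pM2r ?invr_gt0 ?ln2_gt0 //.
by rewrite ltr_ln ?posrE // (lt_trans x0).
Qed.

Lemma log2_tangent (x y : R) : 0 < x -> 0 < y -> log2 y <= log2 x + (y - x) / x / ln 2.
Proof.
move=> x0 y0; rewrite /log2 -mulrDl ler_pM2r ?invr_gt0 ?ln2_gt0 //.
rewrite -lerBlDl -ln_div ?posrE //.
have -> : y / x = 1 + (y - x) / x by field; rewrite gt_eqF.
apply: le_ln1Dx; rewrite mulrBl divff ?gt_eqF //.
by have := divr_gt0 y0 x0; lra.
Qed.

End Log2.

Section WaterFilling.
Variables (R : realType) (n : nat).
Implicit Types (lam a b : 'I_n -> R) (t D : R).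

Lemma lt_maxlam lam t : 0 <= t -> t < maxlam lam -> exists l, t < lam l.
Proof.
move=> t0; apply: contraPP => /forallNP lamt; apply/negP; rewrite -leNgt.
by apply: bigmax_le => // l _; rewrite leNgt; apply/negP/lamt.
Qed.

Lemma D_wf_lt lam t1 t2 :
  0 < t1 -> t1 < t2 -> t2 < maxlam lam -> D_wf lam t1 < D_wf lam t2.
Proof.
move=> t1_gt0 t12 t2max; have [l t2l] := lt_maxlam (ltW (lt_trans t1_gt0 t12)) t2max.
have n_gt0 : 0 < n%:R :> R by rewrite ltr0n (leq_ltn_trans _ (ltn_ord l)).
rewrite /D_wf ltr_pM2l ?invr_gt0 //; apply: (ltr_sum_at (i0 := l)) => [i|].
  exact/le_min2/ltW.
by rewrite !min_r ?(ltW t2l) ?(ltW (lt_trans t12 t2l)).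
Qed.

Lemma t_wf_spec lam D :
  0 < t_wf lam D -> t_wf lam D < maxlam lam /\ D_wf lam (t_wf lam D) = D.
Proof. by rewrite /t_wf; case: xgetP => [t _ [_ spec_t] _ | _]; rewrite ?ltxx. Qed.

Lemma t_wf_eq lam D t : 0 < t -> t < maxlam lam -> D_wf lam t = D -> t_wf lam D = t.
Proof.
move=> t0 tmax Dt; apply: xget_unique => // s [s0 [smax Ds]].
have [st|ts|//] := ltgtP s t.
- by have := D_wf_lt s0 st tmax; rewrite Ds Dt ltxx.
- by have := D_wf_lt t0 ts smax; rewrite Ds Dt ltxx.
Qed.

Definition agree_above a b t := forall l, a l = b l \/ a l <= t /\ b l <= t.

Lemma D_wf_eq a b t :
  agree_above a b t -> \sum_l a l = \sum_l b l -> D_wf a t = D_wf b t.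
Proof.
move=> ab sum_ab; rewrite /D_wf; congr (_ * _); apply/eqP; rewrite -subr_eq0 -sumrB.
rewrite (eq_bigr (fun l => a l - b l)) ?sumrB ?sum_ab ?subrr // => l _.
by case: (ab l) => [->|[al bl]]; rewrite ?subrr // !min_l.
Qed.

Lemma R_wf_eq a b t : 0 < t -> agree_above a b t -> R_wf a t = R_wf b t.
Proof.
move=> t0 ab; rewrite /R_wf; congr (_ * _); apply: eq_bigr => l _.
have max_log2_le x : x <= t -> Num.max 0 (log2 (x / t)) = 0.
  by move=> xt; apply/max_l/log2_le0; rewrite ler_pdivrMr // mul1r.
by case: (ab l) => [->|[al bl]] //; rewrite !max_log2_le.
Qed.

End WaterFilling.

Section ReverseWaterFilling.
Variables (R : realType) (n : nat) (lam : 'I_n -> R).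
Hypotheses (n_gt0 : (0 < n)%N) (lam_Ln : in_Ln lam).
Implicit Types T : R.

Let lam_ge0 l : 0 <= lam l. Proof. by case: lam_Ln. Qed.
Let n_gt0R : 0 < n%:R :> R. Proof. by rewrite ltr0n. Qed.

Let denom_gt0 l T : 0 <= T -> 0 < 1 + lam l * T.
Proof. by move=> T0; rewrite ltr_wpDr // mulr_ge0. Qed.

Lemma in_Ln_exists_gt0 : exists l, 0 < lam l.
Proof.
apply: contrapT => /forallNP lam_le0; case: lam_Ln => _ lam_sum.
have : \sum_l lam l <= 0 by apply: sumr_le0 => l _; rewrite leNgt; apply/negP/lam_le0.
by rewrite lam_sum leNgt n_gt0R.
Qed.

Lemma D_rc0 : D_rc lam 0 = 1.
Proof.
case: lam_Ln => _ lam_sum; rewrite /D_rc.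
by under eq_bigr do rewrite mulr0 addr0 divr1; rewrite lam_sum mulVf ?gt_eqF.
Qed.

Lemma D_rc_le_inv T : 0 < T -> D_rc lam T <= T^-1.
Proof.
move=> T0; rewrite /D_rc ler_pdivrMl //.
apply: (@le_trans _ _ (\sum_(l < n) T^-1)); last by rewrite sumr_const card_ord mulr_natl.
apply: ler_sum => l _; rewrite ler_pdivrMr ?denom_gt0 ?(ltW T0) //.
by rewrite mulrDr mulr1 mulrCA mulVf ?gt_eqF // mulr1 lerDr invr_ge0 (ltW T0).
Qed.

Lemma D_rc_nonincr T1 T2 : 0 <= T1 -> T1 <= T2 -> D_rc lam T2 <= D_rc lam T1.
Proof.
move=> T1_ge0 T12; rewrite /D_rc ler_wpM2l ?invr_ge0 //; apply: ler_sum => l _.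
rewrite ler_wpM2l // lef_pV2 ?posrE ?denom_gt0 ?(le_trans T1_ge0) //.
by rewrite lerD2l ler_wpM2l.
Qed.

Lemma R_rc_lt T1 T2 : 0 <= T1 -> T1 < T2 -> R_rc lam T1 < R_rc lam T2.
Proof.
move=> T1_ge0 T12; have [l lam_l] := in_Ln_exists_gt0.
rewrite /R_rc ltr_pM2l ?invr_gt0 ?mulr_gt0 //; apply: (ltr_sum_at (i0 := l)) => [i|].
  by apply: ler_log2; [exact: denom_gt0 | rewrite lerD2l ler_wpM2l ?(ltW T12)].
by apply: ltr_log2; [exact: denom_gt0 | rewrite ltrD2l ltr_pM2l].
Qed.

Lemma continuous_D_rc T : 0 <= T -> {for T, continuous (D_rc lam)}.
Proof.
move=> T0; apply: cvgM; first exact: cvg_cst.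
apply: cvg_big => [|i _]; first exact: add_continuous.
apply: cvgM; first exact: cvg_cst.
apply: cvgV; first by rewrite gt_eqF ?denom_gt0.
by apply: cvgD; [exact: cvg_cst | apply: cvgM; [exact: cvg_cst | exact: cvg_id]].
Qed.

Local Open Scope classical_set_scope.

Lemma T_rc_spec D : 0 < D -> D < 1 -> 0 < T_rc lam D /\ D_rc lam (T_rc lam D) = D.
Proof.
move=> D0 D1; apply: (xgetPex 0 (P := [set T | 0 < T /\ D_rc lam T = D])).
have b0 : 0 <= 2 / D by rewrite divr_ge0 ?(ltW D0).
have D_rc_cont : {within `[0, 2 / D], continuous (D_rc lam)}.
  apply: continuous_in_subspaceT => T; rewrite inE /= in_itv /= => /andP[T0 _].
  exact: continuous_D_rc.
have D_rc_2D : D_rc lam (2 / D) <= D / 2.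
  by apply: le_trans (D_rc_le_inv _) _; rewrite ?divr_gt0 // invf_div.
have D_between : Num.min (D_rc lam 0) (D_rc lam (2 / D)) <= D <=
                 Num.max (D_rc lam 0) (D_rc lam (2 / D)).
  rewrite D_rc0 ge_min le_max (ltW D1) andbT; apply/orP; right.
  by apply: le_trans D_rc_2D _; rewrite ler_pdivrMr // ler_peMr ?ler1n // (ltW D0).
have [T T_in DT] := IVT b0 D_rc_cont D_between.
exists T; split => //; move: T_in; rewrite in_itv /= => /andP[T0 _].
rewrite lt_neqAle T0 andbT; apply/eqP => T_eq0.
by move: DT D1; rewrite -T_eq0 D_rc0 => <-; rewrite ltxx.
Qed.

End ReverseWaterFilling.

Section RateDistortionTangents.
Variables (R : realType) (T mu : R).
Hypotheses (T_ge0 : 0 <= T) (mu_ge0 : 0 <= mu).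

Let denom_gt0 x : 0 <= x -> 0 < 1 + x * T.
Proof. by move=> x0; rewrite ltr_wpDr // mulr_ge0. Qed.

Let D_rc_term_gap x : 0 <= x ->
  mu / (1 + mu * T) + ((1 + mu * T) ^+ 2)^-1 * (x - mu) - x / (1 + x * T) =
  T * (x - mu) ^+ 2 / ((1 + x * T) * (1 + mu * T) ^+ 2).
Proof. by move=> x0; field; rewrite !gt_eqF ?denom_gt0. Qed.

Lemma D_rc_term_tangent x : 0 <= x ->
  x / (1 + x * T) <= mu / (1 + mu * T) + ((1 + mu * T) ^+ 2)^-1 * (x - mu).
Proof.
move=> x0; rewrite -subr_ge0 D_rc_term_gap //.
apply: divr_ge0; first by rewrite mulr_ge0 ?sqr_ge0.
by apply/ltW; rewrite mulr_gt0 ?exprn_gt0 ?denom_gt0.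
Qed.

Lemma D_rc_term_tangent_lt x : 0 < T -> 0 <= x -> x != mu ->
  x / (1 + x * T) < mu / (1 + mu * T) + ((1 + mu * T) ^+ 2)^-1 * (x - mu).
Proof.
move=> T0 x0 x_neq; rewrite -subr_gt0 D_rc_term_gap //.
apply: divr_gt0; first by rewrite mulr_gt0 // exprn_even_gt0 // subr_eq0.
by rewrite mulr_gt0 ?exprn_gt0 ?denom_gt0.
Qed.

Lemma R_rc_term_tangent x : 0 <= x ->
  log2 (1 + x * T) <= log2 (1 + mu * T) + T / (1 + mu * T) / ln 2 * (x - mu).
Proof.
move=> x0; apply: le_trans (log2_tangent (denom_gt0 mu_ge0) (denom_gt0 x0)) _.
rewrite lerD2l le_eqVlt; apply/orP; left; apply/eqP.
by field; rewrite !gt_eqF ?ln2_gt0 ?denom_gt0.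
Qed.

End RateDistortionTangents.

Lemma bR_rc_lt (R : realType) n (lam lam' : 'I_n -> R) D :
  (0 < n)%N -> in_Ln lam -> in_Ln lam' -> 0 < D -> D < 1 ->
  D_rc lam (T_rc lam D) < D_rc lam' (T_rc lam D) ->
  R_rc lam (T_rc lam D) <= R_rc lam' (T_rc lam D) ->
  bR_rc lam D < bR_rc lam' D.
Proof.
move=> n_gt0 lamL lam'L D0 D1 lt_D le_R.
have [T0 DT] := T_rc_spec n_gt0 lamL D0 D1.
have [T'0 DT'] := T_rc_spec n_gt0 lam'L D0 D1.
have T_lt : T_rc lam D < T_rc lam' D.
  rewrite ltNge; apply/negP => T'_le.
  have := D_rc_nonincr lam'L (ltW T'0) T'_le.
  by rewrite DT' -[X in _ <= X]DT leNgt lt_D.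
exact: le_lt_trans le_R (R_rc_lt n_gt0 lam'L (ltW T0) T_lt).
Qed.

Section FlattenTail.
Variables (R : realType) (n k : nat) (D rho : R) (lam : 'I_n -> R).
Variable i0 : 'I_n.
Hypotheses (n_gt0 : (0 < n)%N) (rho_gt0 : 0 < rho) (lam_Fk : in_Fk k D rho lam).
Hypothesis tail_i0 : (k <= i0)%N.
Implicit Types l j : 'I_n.

Local Notation tail := [pred l : 'I_n | (k <= l)%N].
Local Notation lamb := (tail_avg tail lam).
Local Notation t := (t_wf lam D).

Let lam_Ln : in_Ln lam. Proof. by case: lam_Fk. Qed.
Let lam_head l : (l < k)%N -> t + rho <= lam l.
Proof. by case: lam_Fk => _ [head _]; apply: head. Qed.
Let lam_tail l : (k <= l)%N -> 0 <= lam l /\ lam l <= t - rho.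
Proof. by case: lam_Fk => _ [_ tail]; apply: tail. Qed.

Let tail_nonempty : (0 < #|tail|)%N.
Proof. by apply/card_gt0P; exists i0; rewrite inE. Qed.

Lemma t_wf_gt0 : 0 < t.
Proof.
have [lam_i0_ge0 lam_i0_le] := lam_tail tail_i0.
by apply: lt_le_trans rho_gt0 _; rewrite -subr_ge0 (le_trans lam_i0_ge0).
Qed.

Let le_sub_rho x : x <= t - rho -> x <= t.
Proof. by move/le_trans; apply; rewrite gerBl (ltW rho_gt0). Qed.

Let lamb_tail l : (k <= l)%N -> 0 <= lamb l /\ lamb l <= t - rho.
Proof.
rewrite /tail_avg inE => -> /=.
by split; [apply: tail_mean_ge | apply: tail_mean_le] => // i; rewrite inE => /lam_tail [].
Qed.

Let lamb_head l : (l < k)%N -> lamb l = lam l.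
Proof. by rewrite /tail_avg inE ltnNge => /negbTE ->. Qed.

Let lamb_Ln : in_Ln lamb.
Proof.
case: lam_Ln => lam_ge0 lam_sum; split; last by rewrite sum_tail_avg.
by move=> l; case: (leqP k l) => [/lamb_tail []|/lamb_head ->].
Qed.

Let agree_lam_lamb : agree_above lam lamb t.
Proof.
move=> l; case: (leqP k l) => [kl|/lamb_head ->]; last by left.
by right; split; apply: le_sub_rho; [case: (lam_tail kl) | case: (lamb_tail kl)].
Qed.

Lemma t_wf_tail_avg : t_wf lamb D = t.
Proof.
have [t_max Dt] := t_wf_spec t_wf_gt0.
apply: t_wf_eq => //; first exact: t_wf_gt0.
  have [l t_l] := lt_maxlam (ltW t_wf_gt0) t_max.
  have head_l : (l < k)%N.
    by rewrite ltnNge; apply/negP => /lam_tail [_ /le_sub_rho]; rewrite leNgt t_l.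
  by apply: lt_le_trans (le_bigmax _ _ l); rewrite lamb_head.
by rewrite -(D_wf_eq agree_lam_lamb) // sum_tail_avg.
Qed.

Lemma in_Fk_tail_avg : in_Fk k D rho lamb.
Proof.
split => //; rewrite t_wf_tail_avg; split=> l kl; last exact: lamb_tail.
by rewrite lamb_head ?lam_head.
Qed.

Lemma bR_wf_tail_avg : bR_wf lamb D = bR_wf lam D.
Proof. by rewrite /bR_wf t_wf_tail_avg (R_wf_eq t_wf_gt0 agree_lam_lamb). Qed.

Lemma bR_rc_tail_avg j : (k <= j)%N -> lam i0 != lam j -> 0 < D -> D < 1 ->
  bR_rc lam D < bR_rc lamb D.
Proof.
move=> tail_j lam_neq D0 D1; have [T0 _] := T_rc_spec n_gt0 lam_Ln D0 D1.
set T := T_rc lam D.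
have [l tail_l lam_l] := exists_neq_tail_mean (P := tail) (a := lam) tail_i0 tail_j lam_neq.
have mu_ge0 : 0 <= tail_mean tail lam.
  by apply: tail_mean_ge => // i; rewrite inE => /lam_tail [].
apply: bR_rc_lt => //; rewrite -/T.
  rewrite /D_rc ltr_pM2l ?invr_gt0 ?ltr0n //.
  apply: (sum_lt_tail_avg tail_nonempty (F := fun x => x / (1 + x * T))
           (c := ((1 + tail_mean tail lam * T) ^+ 2)^-1) _ tail_l).
    move=> i; rewrite inE => /lam_tail [lam_i_ge0 _].
    exact: D_rc_term_tangent (ltW T0) mu_ge0 _ lam_i_ge0.
  by apply: D_rc_term_tangent_lt (ltW T0) mu_ge0 _ T0 _ lam_l; case: (lam_tail tail_l).
rewrite /R_rc ler_pM2l ?invr_gt0 ?mulr_gt0 ?ltr0n //.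
apply: (sum_le_tail_avg tail_nonempty (F := fun x => log2 (1 + x * T))
         (c := T / (1 + tail_mean tail lam * T) / ln 2)) => i.
rewrite inE => /lam_tail [lam_i_ge0 _].
exact: R_rc_term_tangent (ltW T0) mu_ge0 _ lam_i_ge0.
Qed.

End FlattenTail.

Theorem claimD2 (R : realType) (n k : nat) (Dstar eps : R) (lamstar : 'I_n -> R) :
  (1 <= n)%N -> (k <= n)%N ->
  0 < Dstar -> Dstar < 1 ->
  0 < eps -> eps < Dstar ->
  let rho := eps * (Dstar - eps) / (2 * n%:R) in
  in_Fk k Dstar rho lamstar ->
  (forall lam : 'I_n -> R, in_Fk k Dstar rho lam -> Gfun lam Dstar <= Gfun lamstar Dstar) ->
  forall i j : 'I_n, (k <= i)%N -> (k <= j)%N -> lamstar i = lamstar j.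
Proof.
move=> n_gt0 _ D0 D1 eps0 epsD rho lam_Fk lam_max i j ki kj.
apply/eqP; apply: contraT => lam_neq.
have rho_gt0 : 0 < rho by rewrite divr_gt0 ?mulr_gt0 ?subr_gt0 ?ltr0n.
have := lam_max _ (in_Fk_tail_avg rho_gt0 lam_Fk ki).
rewrite /Gfun (bR_wf_tail_avg rho_gt0 lam_Fk ki) leNgt ltrD2r.
by rewrite (bR_rc_tail_avg n_gt0 lam_Fk ki kj lam_neq D0 D1).
Qed.
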